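(* Let $r\ge1$ and $n\ge1$ be integers and let $\mathcal P(n-1,r,r+1)$ be the set of lattice paths with steps $(1,1)$ (up) and $(1,-r)$ (down) from $(0,0)$ to $((r+1)n,r+1)$ (so with $rn+1$ up steps and $n-1$ down steps); the steps occupy positions $0,1,\dots,(r+1)n-1$, the step in position $m$ starting at the vertex reached after $m$ steps. (1) Let $n_0,\dots,n_r$ be positive integers with $n_0\ge2$ and $\sum_{i=0}^{r}(n_i-1)=n-1$. Among the paths in $\mathcal P(n-1,r,r+1)$ that start with a down step and have, for each $i=0,\dots,r$, exactly $n_i-1$ down steps in positions congruent to $i \pmod{r+1}$, the number having exactly $j$ down steps in positions congruent to $0\pmod{r+1}$ that start on or below the $x$-axis is independent of $j$ for $j=1,\dots,n_0-1$, and equals $\frac{1}{n_0-1}\binom{n-1}{n_0-2}\binom{n}{n_1-1}\cdots\binom{n}{n_r-1}$. (2) Let $n_0,\dots,n_r$ be nonnegative integers with $n_0\ge1$ and $n_0+\cdots+n_r=rn+1$. Among the paths in $\mathcal P(n-1,r,r+1)$ that start with an up step and have, for each $i=0,\dots,r$, exactly $n_i$ up steps in positions congruent to $i\pmod{r+1}$, the number having exactly $j$ up steps in positions congruent to $0\pmod{r+1}$ that start on or below the $x$-axis is independent of $j$ for $j=1,\dots,n_0$, and equals $\frac{1}{n_0}\binom{n-1}{n_0-1}\binom{n}{n_1}\cdots\binom{n}{n_r}$.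
   Context: A step starts on or below the $x$-axis if its initial vertex has $y$-coordinate $\le0$. *)

From mathcomp Require Import all_boot all_order all_algebra.
Set Implicit Arguments. Unset Strict Implicit. Unset Printing Implicit Defensive.
Import Order.TTheory GRing.Theory Num.Theory.

(* A path of length N = (r+1) n is a finite function 'I_N -> bool:
   true = up step (1,1), false = down step (1,-r).  The step in position m
   starts at the vertex reached after m steps. *)
Notation path_t r n := {ffun 'I_(r.+1 * n) -> bool}.

Definition height (N r : nat) (p : {ffun 'I_N -> bool}) (m : nat) : int :=
  \sum_(k : 'I_N | (k < m)%N) (if p k then 1%:Z else (- (r%:Z))%R).

(* membership in P(n-1, r, r+1): exactly n-1 down steps (hence r n + 1 up
   steps, ending at ((r+1) n, r+1)) *)
Definition in_P (N n : nat) (p : {ffun 'I_N -> bool}) : bool :=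
  #|[set k | ~~ p k]| == n.-1.

Definition starts_down (N : nat) (p : {ffun 'I_N -> bool}) : bool :=
  [exists k : 'I_N, (val k == 0) && ~~ p k].
Definition starts_up (N : nat) (p : {ffun 'I_N -> bool}) : bool :=
  [exists k : 'I_N, (val k == 0) && p k].

Definition steps_mod (N r : nat) (b : bool) (p : {ffun 'I_N -> bool}) (i : nat) : nat :=
  #|[set k : 'I_N | (p k == b) && (k %% r.+1 == i)]|.

Definition low_steps0 (N r : nat) (b : bool) (p : {ffun 'I_N -> bool}) : nat :=
  #|[set k : 'I_N | [&& p k == b, k %% r.+1 == 0 & (height r p k <= 0)%R]]|.

From mathcomp Require Import all_boot all_order all_algebra.
From mathcomp Require Import zify.
Set Implicit Arguments. Unset Strict Implicit. Unset Printing Implicit Defensive.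
Import Order.TTheory GRing.Theory Num.Theory.

(* Rotating a path cyclically by a multiple s of r+1 preserves its number of down steps
   and all residue counts, and brings the step at position s to position 0.  Call a step
   marked if it has the kind under consideration (down in (1), up in (2)) and its position
   is divisible by r+1.  For a path with n-1 down steps put
   phi(t) = (n-1)(t/(r+1)) - n * #(down steps before t) for t divisible by r+1.
   In the rotation by s, the step at position k starts on or below the axis iff
   phi((k+s) mod (r+1)n) <= phi(s), and phi is injective because n-1 and n are coprime.
   So the number of low marked steps of the rotation by a marked s is the rank of phi(s)
   among the marked positions: each j between 1 and the number of marked steps is obtained
   by exactly one rotation.  Counting pairs (path, rotation) gives
   n * #paths = prod_i C(n, c_i), and n C(n-1, m-1) = m C(n, m) turns this into the
   stated formula. *)

Lemma big_ord_ltnS (R : Type) (idx : R) (op : Monoid.com_law idx) N (F : 'I_N -> R)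
    m (ltmN : m < N) :
  \big[op/idx]_(l : 'I_N | l < m.+1) F l
  = op (\big[op/idx]_(l : 'I_N | l < m) F l) (F (Ordinal ltmN)).
Proof.
rewrite (bigD1 (Ordinal ltmN)) //= Monoid.mulmC; apply: congr2 => //.
by apply: eq_bigl => l; rewrite ltnS leq_eqVlt -val_eqE /=; case: ltngtP.
Qed.

Lemma leq_predn_mul n k x : k < n -> (k <= x) = (n.-1 * k <= n * x).
Proof.
case: n => // n ltkn /=; apply/idP/idP => lekx; first nia.
by rewrite leqNgt; apply/negP => ltxk; move: lekx; nia.
Qed.

Lemma predn_mul_addn_inj n t s u v : t < n -> s < n ->
  n.-1 * t + n * u = n.-1 * s + n * v -> t = s.
Proof.
case: n => // n ltt lts /= e.
have e' : (t + u) * n.+1 + s = (s + v) * n.+1 + t by nia.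
by move: (congr1 (modn^~ n.+1) e'); rewrite !modnMDl !modn_small.
Qed.

Section Rank.
Variables (d : Order.disp_t) (R : orderType d) (T : finType).
Variables (M : {set T}) (f : T -> R).
Hypothesis f_inj : {in M &, injective f}.

Definition rank s := #|[set t in M | (f t <= f s)%O]|.

Lemma rank_le_card s : rank s <= #|M|.
Proof. by apply: subset_leq_card; apply/subsetP => t; rewrite inE => /andP[]. Qed.

Lemma rank_gt0 s : s \in M -> 0 < rank s.
Proof. by move=> sM; apply/card_gt0P; exists s; rewrite inE sM lexx. Qed.

Lemma rank_ltn s s' : s \in M -> s' \in M -> (f s < f s')%O -> rank s < rank s'.
Proof.
move=> sM s'M lt_ss'; apply: proper_card; apply/properP; split.
  by apply/subsetP => t; rewrite !inE => /andP[-> le_ts]; exact: le_trans (ltW lt_ss').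
by exists s'; rewrite !inE ?s'M ?lexx // -ltNge.
Qed.

Lemma rank_inj : {in M &, injective rank}.
Proof.
move=> s s' sM s'M e; apply: f_inj => //.
by case: (ltgtP (f s) (f s')) => // [/(rank_ltn sM s'M) | /(rank_ltn s'M sM)]; rewrite e ltnn.
Qed.

Lemma card_rank_eq1 j : 0 < j <= #|M| -> #|[set s in M | rank s == j]| = 1.
Proof.
move=> /andP[j_gt0 le_jM].
pose g s : 'I_#|M|.+1 := inord (rank s).
have gE s : g s = rank s :> nat by rewrite inordK // ltnS rank_le_card.
have g_inj : {in M &, injective g}.
  by move=> s s' sM s'M /(congr1 val); rewrite /= !gE; exact: rank_inj.
have g_im : g @: M = [set~ ord0].
  apply/eqP; rewrite eqEcard card_in_imset // cardsC1 card_ord leqnn andbT.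
  by apply/subsetP => _ /imsetP[s sM ->]; rewrite !inE -val_eqE /= gE -lt0n rank_gt0.
have /imsetP[s sM ejs] : inord j \in g @: M.
  by rewrite g_im !inE -val_eqE /= inordK ?ltnS // -lt0n.
move/(congr1 val): ejs; rewrite /= gE inordK ?ltnS // => ejs.
rewrite -(cards1 s); apply: eq_card => x; rewrite !inE.
apply/andP/eqP => [[xM /eqP]|->]; last by rewrite sM ejs.
by rewrite ejs => /rank_inj; apply.
Qed.

End Rank.

Lemma card_sets_with_card (I T : finType) (c : I -> nat) :
  #|[set g : {ffun I -> {set T}} | [forall i, #|g i| == c i]]| = \prod_i 'C(#|T|, c i).
Proof.
have := card_family (fun i => [pred B : {set T} | #|B| == c i]).
rewrite foldrE big_map big_enum /= => e.
rewrite (eq_bigr (fun i => #|[pred B : {set T} | #|B| == c i]|)); last first.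
  by move=> i _; rewrite -card_draws; apply: eq_card => B; rewrite !inE.
rewrite -e; apply: eq_card => g; rewrite !inE.
by apply/forallP/familyP => h i; move: (h i); rewrite !inE.
Qed.

Lemma card_setX_dep (T U : finType) (A : {set T}) (B : T -> {set U}) :
  #|[set x : T * U | (x.1 \in A) && (x.2 \in B x.1)]| = \sum_(t in A) #|B t|.
Proof.
rewrite -sum1_card (eq_bigl _ _ (fun x => in_set _ _)).
rewrite -(pair_big_dep (fun t => t \in A) (fun t u => u \in B t) (fun _ _ => 1)).
by apply: eq_bigr => t _; rewrite sum1_card.
Qed.

Lemma natr_mul_bin_diag (R : numFieldType) (A n m P : nat) : 0 < n -> 0 < m ->
  A * n = 'C(n, m) * P -> (A%:R = m%:R^-1 * 'C(n.-1, m.-1)%:R * P%:R :> R)%R.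
Proof.
move=> n_gt0 m_gt0 e.
have {}e : A * m = 'C(n.-1, m.-1) * P.
  have bin_diag : n * 'C(n.-1, m.-1) = m * 'C(n, m) by rewrite mul_bin_diag prednK.
  apply/eqP; rewrite -(eqn_pmul2r n_gt0) mulnAC e; apply/eqP.
  by rewrite mulnAC [_ * m]mulnC -bin_diag -mulnA mulnC.
rewrite -mulrA -natrM -e natrM mulrCA mulVf ?mulr1 //.
by rewrite pnatr_eq0 -lt0n.
Qed.

Section Rotations.
Variables (r n : nat).
Local Notation N := (r.+1 * n).
Implicit Types (p q : {ffun 'I_N -> bool}) (b : bool) (c : nat -> nat).

Lemma divn_ord_lt (k : 'I_N) : k %/ r.+1 < n.
Proof. by rewrite ltn_divLR // [n * _]mulnC. Qed.

Lemma pos_lt (i : 'I_r.+1) (l : 'I_n) : i + r.+1 * l < N.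
Proof.
apply: (@leq_trans (r.+1 * l.+1)); first by rewrite mulnS ltn_add2r.
by rewrite leq_mul2l ltn_ord orbT.
Qed.

Definition res (k : 'I_N) : 'I_r.+1 := Ordinal (ltn_pmod k (ltn0Sn r)).
Definition blk (k : 'I_N) : 'I_n := Ordinal (divn_ord_lt k).
Definition pos (i : 'I_r.+1) (l : 'I_n) : 'I_N := Ordinal (pos_lt i l).

Lemma res_pos i l : res (pos i l) = i.
Proof. by apply: val_inj; rewrite /= addnC mulnC modnMDl modn_small. Qed.

Lemma blk_pos i l : blk (pos i l) = l.
Proof. by apply: val_inj; rewrite /= addnC mulnC divnMDl // divn_small ?addn0. Qed.

Lemma posK (k : 'I_N) : pos (res k) (blk k) = k.
Proof. by apply: val_inj; have /= := divn_eq k r.+1; lia. Qed.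

Lemma card_mod0 : #|[set s : 'I_N | s %% r.+1 == 0]| = n.
Proof.
rewrite -[RHS]card_ord -(card_imset _ (can_inj (blk_pos ord0))).
apply: eq_card => k; rewrite !inE; apply/eqP/imsetP => [k0|[l _ ->]].
  by exists (blk k) => //; rewrite -[LHS]posK; congr pos; apply: val_inj.
by rewrite -[_ %% _]/(val (res (pos ord0 l))) res_pos.
Qed.

Definition downs p m : nat := \sum_(l : 'I_N | l < m) ~~ p l.

Lemma downs0 p : downs p 0 = 0.
Proof. exact: big_pred0. Qed.

Lemma downsS p m (ltmN : m < N) : downs p m.+1 = downs p m + ~~ p (Ordinal ltmN).
Proof. exact: big_ord_ltnS. Qed.

Lemma downsN p : downs p N = #|[set k | ~~ p k]|.
Proof.
rewrite -sum1_card big_mkcond [LHS]big_mkcond; apply: eq_bigr => l _.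
by rewrite inE ltn_ord; case: (p l).
Qed.

Lemma height_downs p m : m <= N -> height r p m = (m%:Z - (r.+1 * downs p m)%:Z)%R.
Proof.
elim: m => [|m IH] lemN; first by rewrite /height big_pred0 // downs0 muln0 subrr.
rewrite /height (big_ord_ltnS _ _ lemN) -/(height r p m) IH ?(ltnW lemN) // downsS.
by case: (p _) => /=; lia.
Qed.

Lemma ord_N_gt0 (k : 'I_N) : 0 < N.
Proof. exact: leq_ltn_trans (leq0n k) (ltn_ord k). Qed.

Definition shift s (k : 'I_N) : 'I_N := Ordinal (ltn_pmod (k + s) (ord_N_gt0 k)).
Definition rot s p : {ffun 'I_N -> bool} := [ffun k => p (shift s k)].

Lemma rotE s p k : rot s p k = p (shift s k).
Proof. by rewrite ffunE. Qed.

Lemma shift_inj s : injective (shift s).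
Proof.
move=> a b /(congr1 val) /= /eqP; rewrite eqn_modDr => /eqP.
by rewrite !modn_small // => /val_inj.
Qed.

Lemma shift_mod s (k : 'I_N) : s %% r.+1 = 0 -> shift s k %% r.+1 = k %% r.+1.
Proof.
move=> s0 /=; rewrite modn_dvdm ?dvdn_mulr //.
by rewrite -modnDmr s0 addn0.
Qed.

Lemma rot_rot s t p : (s + t) %% N = 0 -> rot s (rot t p) = p.
Proof.
move=> stN; apply/ffunP => k; rewrite !rotE; congr (p _); apply: val_inj => /=.
by rewrite modnDml -addnA -modnDmr stN addn0 modn_small.
Qed.

Lemma rotK (s : 'I_N) : cancel (rot s) (rot (N - s)).
Proof. by move=> p; apply: rot_rot; rewrite subnK ?modnn // ltnW. Qed.

Lemma rotKV (s : 'I_N) : cancel (rot (N - s)) (rot s).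
Proof. by move=> p; apply: rot_rot; rewrite subnKC ?modnn // ltnW. Qed.

Lemma downs_rot s q k : s < N -> k <= N ->
  downs (rot s q) k + downs q s
  = if s + k < N then downs q (s + k) else downs q N + downs q (s + k - N).
Proof.
move=> ltsN; elim: k => [|k IH] ltkN; first by rewrite downs0 addn0 ltsN.
rewrite downsS rotE /= -addnAC IH ?(ltnW ltkN) // addnS.
have shiftE (t : 'I_N) : t = (k + s) %% N :> nat -> shift s (Ordinal ltkN) = t.
  by move=> e; apply: val_inj.
case: (ltnP (s + k).+1 N) => [ltskN | leNsk].
  rewrite (ltnW ltskN) (downsS _ (ltnW ltskN)) (shiftE (Ordinal (ltnW ltskN))) //.
  by rewrite /= [k + s]addnC modn_small ?(ltnW ltskN).
case: (ltnP (s + k) N) => [ltskN | leNsk'].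
  rewrite (shiftE (Ordinal ltskN)) /=; last by rewrite [k + s]addnC modn_small.
  rewrite -(downsS _ ltskN).
  have -> : (s + k).+1 = N by apply/eqP; rewrite eqn_leq ltskN.
  by rewrite subnn downs0 addn0.
have ltN : s + k - N < N by lia.
rewrite subSn // (downsS _ ltN) addnA (shiftE (Ordinal ltN)) //=.
by rewrite [k + s]addnC -[s + k in RHS](subnK leNsk') modnDr modn_small.
Qed.

(* n times the excess of the average number (n-1)/n of down steps per block of r+1 steps
   over the actual number of down steps before t. *)
Definition potential q (t : nat) : int :=
  ((n.-1 * (t %/ r.+1))%:Z - (n * downs q t)%:Z)%R.

Lemma potential_rot q s k : s %% r.+1 = 0 -> s < N -> k < N -> downs q N = n.-1 ->
  potential (rot s q) k = (potential q ((k + s) %% N) - potential q s)%R.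
Proof.
move=> s0 ltsN ltkN downsqN; have dvd_s : r.+1 %| s by exact/eqP.
have := downs_rot q ltsN (ltnW ltkN); rewrite /potential [s + k]addnC.
case: ltnP => [ltksN | leNks] e.
  rewrite modn_small // divnDr // mulnDr -e mulnDr; lia.
have ltn_ks : n <= k %/ r.+1 + s %/ r.+1.
  by rewrite -divnDr // leq_divRL // [n * _]mulnC.
rewrite -(subnK leNks) modnDr modn_small; last by lia.
rewrite divnBr ?dvdn_mulr // divnDr // mulKn // mulnBr mulnDr.
move/(congr1 (muln n)): e; rewrite /= !mulnDr downsqN => e.
have : n.-1 * n <= n.-1 * (k %/ r.+1) + n.-1 * (s %/ r.+1).
  by rewrite -mulnDr leq_mul2l ltn_ks orbT.
have := mulnC n.-1 n; lia.
Qed.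

Lemma height_le0_potential p k : k %% r.+1 = 0 -> k < N ->
  (height r p k <= 0)%R = (potential p k <= 0)%R.
Proof.
move=> k0 ltkN; have ltkn : k %/ r.+1 < n by exact: (divn_ord_lt (Ordinal ltkN)).
have ek : k = r.+1 * (k %/ r.+1) by rewrite mulnC divnK // /dvdn k0.
rewrite height_downs ?(ltnW ltkN) // /potential !subr_le0 !lez_nat.
by rewrite [X in (X <= _)]ek leq_pmul2l // (leq_predn_mul _ ltkn).
Qed.

Lemma low_steps0_rot b q (s : 'I_N) : s %% r.+1 = 0 -> downs q N = n.-1 ->
  low_steps0 r b (rot s q)
  = #|[set t : 'I_N | [&& q t == b, t %% r.+1 == 0 & (potential q t <= potential q s)%R]]|.
Proof.
move=> s0 downsqN; rewrite /low_steps0 -[RHS](card_preimset _ (@shift_inj s)).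
apply: eq_card => k; rewrite !inE rotE shift_mod //.
case: (q _ == b) => //=; case: eqP => //= k0.
by rewrite height_le0_potential // potential_rot // subr_le0.
Qed.

Lemma potential_inj q (t s : 'I_N) : t %% r.+1 = 0 -> s %% r.+1 = 0 ->
  potential q t = potential q s -> t = s.
Proof.
move=> t0 s0; rewrite /potential => e.
have {}e : n.-1 * (t %/ r.+1) + n * downs q s = n.-1 * (s %/ r.+1) + n * downs q t.
  by move: e; lia.
have := predn_mul_addn_inj (divn_ord_lt t) (divn_ord_lt s) e.
by move=> ediv; apply: val_inj => /=; rewrite (divn_eq t r.+1) (divn_eq s r.+1) t0 s0 ediv.
Qed.

Definition low_shifts b j q :=
  [set s : 'I_N | [&& q s == b, s %% r.+1 == 0 & low_steps0 r b (rot s q) == j]].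

Lemma card_low_shifts b j q : downs q N = n.-1 -> 0 < j <= steps_mod r b q 0 ->
  #|low_shifts b j q| = 1.
Proof.
move=> downsqN lejc.
have f_inj : {in [set t : 'I_N | (q t == b) && (t %% r.+1 == 0)] &, injective (potential q \o val)}.
  by move=> t s; rewrite !inE => /andP[_ /eqP t0] /andP[_ /eqP s0]; exact: potential_inj.
rewrite -(card_rank_eq1 f_inj lejc); apply: eq_card => s; rewrite !inE -andbA.
case: (q s == b) => //=; case: eqP => //= s0.
by rewrite low_steps0_rot //; congr (_ == j); apply: eq_card => t; rewrite !inE andbA.
Qed.

Lemma steps_mod_rot b q s i : s %% r.+1 = 0 -> steps_mod r b (rot s q) i = steps_mod r b q i.
Proof.
move=> s0; rewrite /steps_mod -[RHS](card_preimset _ (@shift_inj s)).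
by apply: eq_card => k; rewrite !inE rotE shift_mod.
Qed.

Lemma in_P_rot q s : in_P n (rot s q) = in_P n q.
Proof.
rewrite /in_P -[in RHS](card_preimset _ (@shift_inj s)).
by congr (_ == _); apply: eq_card => k; rewrite !inE rotE.
Qed.

Definition starts_with b p := [exists k : 'I_N, (val k == 0) && (p k == b)].

Lemma starts_with_rot b q (s : 'I_N) : starts_with b (rot s q) = (q s == b).
Proof.
have shift0 (k : 'I_N) : k = 0 :> nat -> shift s k = s.
  by move=> k0; apply: val_inj => /=; rewrite k0 add0n modn_small.
apply/existsP/idP => [[k /andP[/eqP k0]]|qs].
  by rewrite rotE shift0.
by exists (Ordinal (ord_N_gt0 s)); rewrite rotE shift0.
Qed.

Definition paths_with b c :=
  [set q : {ffun 'I_N -> bool} | in_P n q && [forall i : 'I_r.+1, steps_mod r b q i == c i]].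

Definition low_paths b c j := [set p : {ffun 'I_N -> bool} | [&& in_P n p, starts_with b p,
  [forall i : 'I_r.+1, steps_mod r b p i == c i] & low_steps0 r b p == j]].

Lemma paths_with_rot b c q s : s %% r.+1 = 0 ->
  (rot s q \in paths_with b c) = (q \in paths_with b c).
Proof.
by move=> s0; rewrite !inE in_P_rot; under eq_forallb => i do rewrite steps_mod_rot //.
Qed.

Lemma low_paths_rot b c j q (s : 'I_N) : s %% r.+1 = 0 ->
  (rot s q \in low_paths b c j) = (q \in paths_with b c) && (s \in low_shifts b j q).
Proof.
move=> s0; rewrite -(paths_with_rot _ _ _ s0) !inE starts_with_rot s0 eqxx /=.
by case: (in_P n _); case: (q s == b); case: [forall _, _].
Qed.

Lemma card_low_paths b c j : 0 < j <= c 0 -> #|low_paths b c j| * n = #|paths_with b c|.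
Proof.
move=> lejc.
pose pairs := [set x : {ffun 'I_N -> bool} * 'I_N |
  (x.1 \in paths_with b c) && (x.2 \in low_shifts b j x.1)].
have card_pairs : #|pairs| = #|paths_with b c|.
  rewrite card_setX_dep -sum1_card; apply: eq_bigr => q.
  rewrite !inE => /andP[inPq /forallP stepsq]; apply: card_low_shifts.
    by rewrite downsN (eqP inPq).
  by rewrite (eqP (stepsq ord0)).
pose rot_pair (x : {ffun 'I_N -> bool} * 'I_N) := (rot x.2 x.1, x.2).
have rot_pair_inj : injective rot_pair.
  move=> [q s] [q' s'] [e es]; rewrite /= in e es; subst s'.
  by rewrite -(rotK s q) e rotK.
have rot_pairs : setX (low_paths b c j) [set s : 'I_N | s %% r.+1 == 0] = rot_pair @: pairs.
  apply/setP => -[p s]; rewrite in_setX in_set; apply/andP/imsetP.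
    case=> lowp /eqP s0; exists (rot (N - s) p, s); last by rewrite /rot_pair /= rotKV.
    by rewrite in_set /= -low_paths_rot ?rotKV.
  case=> -[q s'] + [-> ->]; rewrite in_set /= => /andP[inq lows].
  have s0 : s' %% r.+1 = 0 by move: lows; rewrite in_set => /and3P[_ /eqP].
  by split; [rewrite low_paths_rot // inq lows | rewrite s0].
by rewrite -[n in _ * n]card_mod0 -cardsX rot_pairs card_imset.
Qed.

Definition classes b q : {ffun 'I_r.+1 -> {set 'I_n}} :=
  [ffun i => [set l | q (pos i l) == b]].

Definition of_classes b (g : {ffun 'I_r.+1 -> {set 'I_n}}) : {ffun 'I_N -> bool} :=
  [ffun k => if blk k \in g (res k) then b else ~~ b].

Lemma classes_bij b : bijective (classes b).
Proof.
exists (of_classes b) => [q | g]; apply/ffunP.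
  by move=> k; rewrite !ffunE inE posK; case: (q k); case: b.
have ifE (x : bool) : (if x then b else ~~ b) == b = x by case: x; case: b.
by move=> i; apply/setP => l; rewrite !ffunE inE ffunE res_pos blk_pos ifE.
Qed.

Lemma steps_mod_classes b q (i : 'I_r.+1) : steps_mod r b q i = #|classes b q i|.
Proof.
rewrite ffunE -(card_imset _ (can_inj (blk_pos i))); apply: eq_card => k; rewrite !inE.
apply/andP/imsetP => [[qkb /eqP ki] | [l]]; last first.
  by rewrite inE => qlb ->; rewrite qlb -[_ %% _]/(val (res (pos i l))) res_pos.
have eres : res k = i by apply: val_inj.
by exists (blk k); rewrite ?inE -eres posK.
Qed.

Lemma card_steps_mod b c :
  #|[set q : {ffun 'I_N -> bool} | [forall i : 'I_r.+1, steps_mod r b q i == c i]]|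
  = \prod_(i < r.+1) 'C(n, c i).
Proof.
rewrite -[n in RHS]card_ord -card_sets_with_card.
rewrite -(on_card_preimset (onW_bij _ (classes_bij b))); apply: eq_card => q.
by rewrite !inE; apply: eq_forallb => i; rewrite steps_mod_classes.
Qed.

Lemma card_steps_sum b q : #|[set k | q k == b]| = \sum_(i < r.+1) steps_mod r b q i.
Proof.
rewrite -sum1_card (partition_big res xpredT) //=; apply: eq_bigr => i _.
by rewrite /steps_mod -sum1_card; apply: eq_bigl => k; rewrite !inE -val_eqE.
Qed.

Lemma in_PE b q : 0 < n ->
  in_P n q = (#|[set k | q k == b]| == if b then r * n + 1 else n.-1).
Proof.
move=> n_gt0; have downsE : [set k | ~~ q k] = ~: [set k | q k == true].
  by apply/setP => k; rewrite !inE; case: (q k).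
case: b; last by rewrite /in_P; congr (_ == _); apply: eq_card => k; rewrite !inE; case: (q k).
rewrite /in_P downsE; have := cardsC [set k | q k == true]; rewrite card_ord.
have := mulSn r n; lia.
Qed.

Lemma card_paths_with b c : 0 < n ->
  \sum_(i < r.+1) c i = (if b then r * n + 1 else n.-1) ->
  #|paths_with b c| = \prod_(i < r.+1) 'C(n, c i).
Proof.
move=> n_gt0 sumc; rewrite -(card_steps_mod b); apply: eq_card => q; rewrite !inE.
case: (boolP [forall i, _]) => [/forallP stepsq | _]; rewrite ?andbF // andbT.
rewrite (in_PE b _ n_gt0) card_steps_sum.
by under eq_bigr => i _ do rewrite (eqP (stepsq i)); rewrite sumc eqxx.
Qed.

Lemma natr_card_low_paths (R : numFieldType) b c j : 0 < n -> 0 < j <= c 0 ->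
  \sum_(i < r.+1) c i = (if b then r * n + 1 else n.-1) ->
  (#|low_paths b c j|%:R
   = (c 0)%:R^-1 * 'C(n.-1, (c 0).-1)%:R * \prod_(1 <= i < r.+1) 'C(n, c i)%:R :> R)%R.
Proof.
move=> n_gt0 lejc sumc; have c0_gt0 : 0 < c 0 by case/andP: lejc; exact: leq_trans.
rewrite -natr_prod big_add1 big_mkord; apply: natr_mul_bin_diag => //.
by rewrite card_low_paths // card_paths_with // big_ord_recl.
Qed.

Lemma starts_downE p : starts_down p = starts_with false p.
Proof. by apply: eq_existsb => k; case: (p k). Qed.

Lemma starts_upE p : starts_up p = starts_with true p.
Proof. by apply: eq_existsb => k; case: (p k). Qed.

End Rotations.

Theorem theorem16 (r n : nat) (hr : 1 <= r) (hn : 1 <= n) :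
  (forall nn : nat -> nat,
     (forall i, i <= r -> 0 < nn i) -> 2 <= nn 0 ->
     \sum_(i < r.+1) (nn i - 1) = n - 1 ->
     forall j, 1 <= j <= nn 0 - 1 ->
     (#|[set p : path_t r n | [&& in_P n p, starts_down p,
          [forall i : 'I_r.+1, steps_mod r false p i == nn i - 1]
        & low_steps0 r false p == j]]|%:R : rat)
     = (((nn 0 - 1)%N%:R)^-1 * ('C(n - 1, nn 0 - 2)%N)%:R
         * \prod_(1 <= i < r.+1) ('C(n, nn i - 1)%N)%:R)%R)
  /\
  (forall nn : nat -> nat,
     1 <= nn 0 ->
     \sum_(i < r.+1) nn i = r * n + 1 ->
     forall j, 1 <= j <= nn 0 ->
     (#|[set p : path_t r n | [&& in_P n p, starts_up p,
          [forall i : 'I_r.+1, steps_mod r true p i == nn i]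
        & low_steps0 r true p == j]]|%:R : rat)
     = (((nn 0%N)%:R)^-1 * ('C(n - 1, nn 0 - 1)%N)%:R
         * \prod_(1 <= i < r.+1) ('C(n, nn i)%N)%:R)%R).
Proof.
split=> [nn _ _ sumnn j lej | nn _ sumnn j lej].
- have := natr_card_low_paths rat (r := r) (b := false) (c := fun i => nn i - 1) hn lej.
  rewrite /= -!subn1 -subnDA => /(_ sumnn) <-.
  by congr (_%:R)%R; apply: eq_card => p; rewrite !inE starts_downE.
- have := natr_card_low_paths rat (b := true) hn lej sumnn.
  rewrite -!subn1 => <-.
  by congr (_%:R)%R; apply: eq_card => p; rewrite !inE starts_upE.
Qed.
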